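(* Let $G$ be a graph with finitely many vertices. Let $v\in G^0$ be a regular vertex that is not a source and that emits exactly one edge $f_0$, where $f_0$ is not a loop of length one (i.e. $r(f_0)\neq v$). Define a graph $E$ as follows: - $E^0=G^0\setminus\{v\}$; - $E^1=(G^1\setminus(r^{-1}(v)\cup s^{-1}(v)))\cup\{[ef_0]: e\in r^{-1}(v)\}$; - range and source maps extend those of $G$, with $r_E([ef_0])=r_G(f_0)$ and $s_E([ef_0])=s_G(e)$. Then $G\sim_M E$.
   Context: A graph $G=(G^0,G^1,r,s)$ has vertex set $G^0$, edge set $G^1$, and range/source maps; multiple edges and loops are allowed. A source receives no edges, a sink emits no edges, and an infinite emitter emits infinitely many edges. A vertex is singular if it is a sink or infinite emitter, and regular otherwise. A loop of length one is an edge $e$ with $s(e)=r(e)$. Move-equivalence $\sim_M$ is the smallest equivalence relation on graphs with finitely many vertices such that $G\sim_M E$ whenever $E$ is isomorphic to a graph obtained from $G$ by one of the following moves. (S) Delete a regular source together with the edges it emits. (R) For a regular vertex $u$ emitting exactly one edge $f$, with $r(f)\neq u$, and all of whose incoming edges have the same source $v$: delete $u$, $f$ and the edges into $u$, and add for each $e\in r^{-1}(u)$ an edge $[ef]$ from $v$ to $r(f)$. (O) Out-splitting at a non-sink $v$ along a partition $\mathcal E_1,\dots,\mathcal E_n$ of $s^{-1}(v)$ with at most one infinite part. Replace $v$ by $v^1,\dots,v^n$. Each edge $e$ into $v$ becomes copies $e^1,\dots,e^n$ with $r(e^i)=v^i$ and source $s(e)$, or source $v^j$ if $s(e)=v$ and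 $e\in\mathcal E_j$. An edge from $v$ to $w\neq v$ lying in $\mathcal E_i$ gets source $v^i$. (I) In-splitting at a regular non-source $v$ along a partition $\mathcal E_1,\dots,\mathcal E_n$ of $r^{-1}(v)$. Replace $v$ by $v^1,\dots,v^n$. Each edge $e$ out of $v$ becomes copies $e^1,\dots,e^n$ with $s(e^i)=v^i$ and range $r(e)$, or range $v^j$ if $r(e)=v$ and $e\in\mathcal E_j$. An edge into $v$ from $w\neq v$ lying in $\mathcal E_i$ gets range $v^i$. *)

From mathcomp Require Import all_boot.
Set Implicit Arguments. Unset Strict Implicit. Unset Printing Implicit Defensive.

(* A graph with finitely many vertices: vertex set a finType, edge set an
   arbitrary type (possibly infinite: infinite emitters allowed). *)
Record graph := Graph {
  gV : finType;
  gE : Type;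
  gs : gE -> gV;
  gr : gE -> gV }.

Definition finite_set (T : Type) (P : T -> Prop) : Prop :=
  exists n (f : 'I_n -> T), forall x, P x -> exists i, f i = x.

Section Vertices.
Variable G : graph.
Definition is_sink (v : gV G) := forall e : gE G, gs e <> v.
Definition is_source (v : gV G) := forall e : gE G, gr e <> v.
Definition inf_emitter (v : gV G) := ~ finite_set (fun e : gE G => gs e = v).
Definition singular (v : gV G) := is_sink v \/ inf_emitter v.
Definition regular (v : gV G) := ~ singular v.
End Vertices.

Definition bij_onto (A B : Type) (f : A -> B) (P : B -> Prop) : Prop :=
  injective f /\ forall y, P y <-> exists x, f x = y.

(* (S) E is isomorphic to G with a regular source u and its edges deleted. *)
Definition moveS (G E : graph) : Prop :=
  exists u : gV G, regular u /\ is_source u /\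
  exists (p0 : gV E -> gV G) (p1 : gE E -> gE G),
    bij_onto p0 (fun x => x <> u) /\
    bij_onto p1 (fun e => gs e <> u) /\
    forall d, p0 (gs d) = gs (p1 d) /\ p0 (gr d) = gr (p1 d).

(* (R) reduction.  Edges of the new graph: (inl e) for old edges not touching
   u, (inr e) for the new edge [e f] with e in r^{-1}(u). *)
Definition moveR (G E : graph) : Prop :=
  exists (u : gV G) (f : gE G) (w : gV G),
    regular u /\ gs f = u /\ (forall e, gs e = u -> e = f) /\ gr f <> u /\
    (forall e, gr e = u -> gs e = w) /\
  exists (p0 : gV E -> gV G) (p1 : gE E -> gE G + gE G),
    bij_onto p0 (fun x => x <> u) /\
    bij_onto p1 (fun y => match y with
                          | inl e => gs e <> u /\ gr e <> u
                          | inr e => gr e = u end) /\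
    forall d, match p1 d with
              | inl e => p0 (gs d) = gs e /\ p0 (gr d) = gr e
              | inr e => p0 (gs d) = w /\ p0 (gr d) = gr f
              end.

(* (O) out-splitting at a non-sink v along a partition of s^{-1}(v) into
   n nonempty parts E_i = {e | s e = v /\ c e = i}, at most one infinite.
   New vertices: inl x (x <> v), inr i (= v^i).
   New edges: (e, None) for e with r e <> v; (e, Some i) = e^i for r e = v. *)
Definition moveO (G E : graph) : Prop :=
  exists (v : gV G) (n : nat) (c : gE G -> 'I_n),
    ~ is_sink v /\
    (forall i, exists e, gs e = v /\ c e = i) /\
    (forall i j, i <> j ->
       ~ (~ finite_set (fun e => gs e = v /\ c e = i) /\
          ~ finite_set (fun e => gs e = v /\ c e = j))) /\
  exists (p0 : gV E -> gV G + 'I_n) (p1 : gE E -> gE G * option 'I_n),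
    bij_onto p0 (fun y => match y with inl x => x <> v | inr _ => True end) /\
    bij_onto p1 (fun y => match y.2 with
                          | None => gr y.1 <> v
                          | Some _ => gr y.1 = v end) /\
    forall d,
      p0 (gs d) = (if gs (p1 d).1 == v then inr (c (p1 d).1)
                   else inl (gs (p1 d).1)) /\
      p0 (gr d) = (match (p1 d).2 with
                   | None => inl (gr (p1 d).1)
                   | Some i => inr i end).

(* (I) in-splitting at a regular non-source v along a partition of r^{-1}(v)
   into n nonempty parts E_i = {e | r e = v /\ c e = i}.
   New edges: (e, None) for e with s e <> v; (e, Some i) = e^i for s e = v. *)
Definition moveI (G E : graph) : Prop :=
  exists (v : gV G) (n : nat) (c : gE G -> 'I_n),
    regular v /\ ~ is_source v /\
    (forall i, exists e, gr e = v /\ c e = i) /\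
  exists (p0 : gV E -> gV G + 'I_n) (p1 : gE E -> gE G * option 'I_n),
    bij_onto p0 (fun y => match y with inl x => x <> v | inr _ => True end) /\
    bij_onto p1 (fun y => match y.2 with
                          | None => gs y.1 <> v
                          | Some _ => gs y.1 = v end) /\
    forall d,
      p0 (gr d) = (if gr (p1 d).1 == v then inr (c (p1 d).1)
                   else inl (gr (p1 d).1)) /\
      p0 (gs d) = (match (p1 d).2 with
                   | None => inl (gs (p1 d).1)
                   | Some i => inr i end).

Definition move (G E : graph) : Prop :=
  moveS G E \/ moveR G E \/ moveO G E \/ moveI G E.

Inductive move_equiv : graph -> graph -> Prop :=
  | me_move G E : move G E -> move_equiv G E
  | me_refl G : move_equiv G G
  | me_sym G E : move_equiv G E -> move_equiv E G
  | me_trans G H E : move_equiv G H -> move_equiv H E -> move_equiv G E.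

Notation "G ~M E" := (move_equiv G E) (at level 70).

Section Collapse.
Variables (G : graph) (v : gV G) (f0 : gE G).
Hypothesis Hnl : gr f0 <> v.
Hypothesis Hone : forall e, gs e = v -> e = f0.

Lemma neq_of (T : eqType) (x y : T) : x <> y -> x != y.
Proof. by move/eqP. Qed.

Lemma collapse_src_ok (e : gE G) : gr e = v -> gs e != v.
Proof.
move=> hr; apply/eqP => hs; apply: Hnl; by rewrite -(Hone hs).
Qed.

Definition cV : finType := {x : gV G | x != v}.
Definition cE : Type :=
  ({e : gE G | gs e <> v /\ gr e <> v} + {e : gE G | gr e = v})%type.

Definition c_src (d : cE) : cV :=
  match d with
  | inl p => exist _ (gs (proj1_sig p)) (neq_of (proj1 (proj2_sig p)))
  | inr p => exist _ (gs (proj1_sig p)) (collapse_src_ok (proj2_sig p))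
  end.

Definition c_rng (d : cE) : cV :=
  match d with
  | inl p => exist _ (gr (proj1_sig p)) (neq_of (proj2 (proj2_sig p)))
  | inr p => exist _ (gr f0) (neq_of Hnl)
  end.

Definition collapse : graph := @Graph cV cE c_src c_rng.
End Collapse.

From mathcomp Require Import all_boot.
From Stdlib Require Import Classical ProofIrrelevance.
Set Implicit Arguments. Unset Strict Implicit. Unset Printing Implicit Defensive.

(* If all edges entering v come from a single vertex, (R) applies directly.
   Otherwise let w be the source of some edge into v and in-split v into v^0,
   receiving the edges from w, and v^1, receiving the others.  Now v^0 emits
   only f0^0 and is entered only from w, so (R) removes it; the result is G
   with the edges from w to v redirected to r(f0), whose collapse at v is
   again E.  As v is now entered from one vertex fewer, induction on the
   number of such vertices concludes. *)

Lemma bij_onto_val (T : Type) (P : pred T) (Q : T -> Prop) :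
  (forall y, Q y <-> P y) -> bij_onto (val : {y | P y} -> T) Q.
Proof.
move=> QP; split; first exact: val_inj.
move=> y; rewrite QP; split=> [Py | [[x Px] <-] //].
by exists (exist _ y Py).
Qed.

Lemma bij_onto_comp (A B C : Type) (p : A -> B) (g : B -> C)
    (P : B -> Prop) (Q : C -> Prop) :
  bij_onto p P -> (forall y y', P y -> P y' -> g y = g y' -> y = y') ->
  (forall z, Q z <-> exists2 y, P y & g y = z) -> bij_onto (g \o p) Q.
Proof.
move=> [p_inj p_onto] g_inj gQ; split.
  move=> x x' /= eq_gp; apply: p_inj; apply: g_inj eq_gp.
  - by apply/p_onto; exists x.
  - by apply/p_onto; exists x'.
move=> z; rewrite gQ; split=> [[y /p_onto [x <-] <-] | [x <-]].
  by exists x.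
by exists (p x) => //; apply/p_onto; exists x.
Qed.

Lemma ord2P (i : 'I_2) : i = ord0 \/ i = ord_max.
Proof. by case: i => [[|[|//]] ?]; [left | right]; apply: val_inj. Qed.

Lemma regular_of_single_edge (X : graph) (v : gV X) (f : gE X) :
  gs f = v -> (forall e, gs e = v -> e = f) -> regular v.
Proof.
move=> fv v_f [v_sink | v_inf]; first exact: v_sink fv.
by apply: v_inf; exists 1, (fun _ => f) => e /v_f ->; exists ord0.
Qed.

Lemma common_source_in (X : graph) (v : gV X) :
  ~ (exists e e', [/\ gr e = v, gr e' = v & gs e <> gs e']) ->
  exists w, forall e, gr e = v -> gs e = w.
Proof.
move=> no_pair; case: (classic (exists e, gr e = v)) => [[e ev] | no_in].
  exists (gs e) => e' e'v; apply: NNPP => ne.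
  by apply: no_pair; exists e', e.
by exists v => e ev; case: no_in; exists e.
Qed.

Definition collapse_edge (X : graph) (v : gV X) (y : gE X + gE X) : Prop :=
  match y with inl e => gs e <> v /\ gr e <> v | inr e => gr e = v end.

Definition untag (T : Type) (y : T + T) : T :=
  match y with inl e | inr e => e end.

Lemma collapse_edge_tag (X : graph) (v : gV X) (y : gE X + gE X) :
  collapse_edge v y ->
  y = if gr (untag y) == v then inr (untag y) else inl (untag y).
Proof.
by case: y => e /=; [case=> _ /eqP/negbTE -> | move=> ->; rewrite eqxx].
Qed.

(* An isomorphism between C and the graph obtained from X by deleting v and
   replacing each edge e into v by [e f]: exactly the data required by (R),
   except that the edges into v may have different sources. *)
Definition is_collapse (X : graph) (v : gV X) (f : gE X) (C : graph) : Prop :=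
  exists (p0 : gV C -> gV X) (p1 : gE C -> gE X + gE X),
    bij_onto p0 (fun x => x <> v) /\
    bij_onto p1 (collapse_edge v) /\
    forall d, match p1 d with
              | inl e => p0 (gs d) = gs e /\ p0 (gr d) = gr e
              | inr e => p0 (gs d) = gs e /\ p0 (gr d) = gr f
              end.

Lemma is_collapse_collapse (G : graph) (v : gV G) (f0 : gE G)
    (Hnl : gr f0 <> v) (Hone : forall e, gs e = v -> e = f0) :
  is_collapse v f0 (collapse Hnl Hone).
Proof.
pose p1 (d : gE (collapse Hnl Hone)) : gE G + gE G :=
  match d with inl p => inl (proj1_sig p) | inr p => inr (proj1_sig p) end.
exists val, p1; split; [|split].
- by apply: bij_onto_val => x; split=> /eqP.
- split.
    case=> [[e h] | [e h]] [[e' h'] | [e' h']] //= [eq_ee']; subst e';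
      by rewrite (proof_irrelevance _ h h').
  case=> e; split=> [h | [[[e' h] | [e' h]] //= [<-] //]].
  + by exists (inl (exist _ e h)).
  + by exists (inr (exist _ e h)).
- by case=> [[e h] | [e h]].
Qed.

Lemma moveR_of_is_collapse (X : graph) (v : gV X) (f : gE X) (C : graph) :
  gs f = v -> (forall e, gs e = v -> e = f) -> gr f <> v ->
  ~ (exists e e', [/\ gr e = v, gr e' = v & gs e <> gs e']) ->
  is_collapse v f C -> moveR X C.
Proof.
move=> fv v_f fnv /common_source_in [w in_w] [p0 [p1 [bij0 [bij1 compat]]]].
exists v, f, w; split; first exact: regular_of_single_edge fv v_f.
do 4 (split; first by []); exists p0, p1; do 2 (split; first by []).
move=> d; have := compat d.
have /(proj2 bij1) : exists d', p1 d' = p1 d by exists d.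
by case: (p1 d) => // e /in_w <-.
Qed.

Section InSplit.
Variables (X : graph) (v : gV X) (n : nat) (c : gE X -> 'I_n).

Definition insplit_vertex (y : gV X + 'I_n) : bool :=
  if y is inl x then x != v else true.
Definition insplit_edge (y : gE X * option 'I_n) : bool :=
  if y.2 is Some _ then gs y.1 == v else gs y.1 != v.

Definition insplitV : finType := {y | insplit_vertex y}.
Definition insplitE : Type := {y | insplit_edge y}.

Lemma insplit_src_proof (d : insplitE) :
  insplit_vertex (if (val d).2 is Some i then inr i else inl (gs (val d).1)).
Proof. by case: d => [[e [i|]]]. Qed.

Lemma insplit_rng_proof (d : insplitE) :
  insplit_vertex (if gr (val d).1 == v then inr (c (val d).1)
                  else inl (gr (val d).1)).
Proof. by case: ifP => // /negbT. Qed.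

Definition insplit : graph :=
  @Graph insplitV insplitE
    (fun d => exist insplit_vertex _ (insplit_src_proof d))
    (fun d => exist insplit_vertex _ (insplit_rng_proof d)).

Lemma moveI_insplit :
  regular v -> ~ is_source v -> (forall i, exists e, gr e = v /\ c e = i) ->
  moveI X insplit.
Proof.
move=> v_reg v_nsrc c_onto; exists v, n, c; do 3 (split; first done).
exists val, val; split; [|split] => //.
  by apply: bij_onto_val => -[x|i] //=; split=> /eqP.
by apply: bij_onto_val => -[e [i|]] /=; split=> /eqP.
Qed.

End InSplit.

Definition from_to (X : graph) (w v : gV X) (e : gE X) : bool :=
  (gs e == w) && (gr e == v).

Definition redirect (X : graph) (P : pred (gE X)) (t : gV X) : graph :=
  @Graph (gV X) (gE X) (@gs X) (fun e => if P e then t else gr e).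

Section SplitOffOneSource.
Variables (X : graph) (v : gV X) (f : gE X) (w : gV X).
Hypotheses (fv : gs f = v) (v_f : forall e, gs e = v -> e = f).
Hypothesis fnv : gr f <> v.

Definition source_class (e : gE X) : 'I_2 :=
  if gs e == w then ord0 else ord_max.

Local Notation H := (insplit v source_class).

Definition v0 : gV H := exist (@insplit_vertex _ v 2) (inr ord0) isT.
Definition v1 : gV H := exist (@insplit_vertex _ v 2) (inr ord_max) isT.
(* [insubd] sends [inl v], which is not a vertex of H, to v1; likewise
   [lift_edge] sends f, the only edge that leaves v, to its copy leaving v1. *)
Definition lift_vertex (x : gV X) : gV H := insubd v1 (inl x).

Lemma f_split_proof (i : 'I_2) : insplit_edge v (f, Some i).
Proof. exact/eqP. Qed.

Definition f_split (i : 'I_2) : gE H :=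
  exist (@insplit_edge _ v 2) _ (f_split_proof i).
Definition lift_edge (e : gE X) : gE H := insubd (f_split ord_max) (e, None).

Lemma val_lift_vertex x :
  val (lift_vertex x) = if x == v then inr ord_max else inl x.
Proof. by rewrite /lift_vertex val_insubd /=; case: eqP. Qed.

Lemma val_lift_edge e :
  val (lift_edge e) = if gs e == v then (f, Some ord_max) else (e, None).
Proof. by rewrite /lift_edge val_insubd /insplit_edge /=; case: eqP. Qed.

Lemma lift_vertex_inj : injective lift_vertex.
Proof.
move=> x y /(congr1 val); rewrite !val_lift_vertex.
by do 2 case: eqP => [-> | _] //; case.
Qed.

Lemma lift_vertex_neq_v0 x : lift_vertex x <> v0.
Proof.
by move/(congr1 val); rewrite val_lift_vertex; case: eqP => // _ [].
Qed.

Lemma lift_vertex_onto y : y <> v0 -> exists x, lift_vertex x = y.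
Proof.
case: y => -[x | i] y_ok y_nv0.
  by exists x; apply: val_inj; rewrite val_lift_vertex /= (negbTE y_ok).
exists v; apply: val_inj; rewrite val_lift_vertex eqxx /=.
by case: (ord2P i) y_nv0 => -> // []; apply: val_inj.
Qed.

Lemma src_lift_edge e : gs (lift_edge e) = lift_vertex (gs e).
Proof.
apply: val_inj; rewrite /= val_lift_edge val_lift_vertex.
by case: eqP.
Qed.

Lemma rng_lift_edge e :
  gr (lift_edge e) = if from_to w v e then v0 else lift_vertex (gr e).
Proof.
apply: val_inj; rewrite /= (fun_if val) val_lift_edge val_lift_vertex /from_to.
case: (gs e =P v) => [/v_f -> | env] /=.
  by rewrite (introF eqP fnv) andbF.
by rewrite /source_class; case: eqP; case: eqP.
Qed.

Lemma lift_edge_inj : injective lift_edge.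
Proof.
move=> e e' /(congr1 val); rewrite !val_lift_edge.
by do 2 case: eqP => [/v_f -> | _] //; case.
Qed.

Lemma rng_f_split0 : gr (f_split ord0) = lift_vertex (gr f).
Proof. by apply: val_inj; rewrite /= val_lift_vertex !(introF eqP fnv). Qed.

Lemma src_v0 d : gs d = v0 -> d = f_split ord0.
Proof.
case: d => -[e [i|]] d_ok /(congr1 val) //= [->].
by apply: val_inj => /=; move/eqP: d_ok => /= /v_f ->.
Qed.

Lemma lift_edgeK d : gs d <> v0 -> lift_edge (val d).1 = d.
Proof.
case: d => -[e [i|]] d_ok d_nv0; apply: val_inj; rewrite val_lift_edge /=.
  have e_v : gs e = v := eqP d_ok.
  rewrite e_v eqxx (v_f e_v); case: (ord2P i) d_nv0 => -> // [].
  exact: val_inj.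
by rewrite ifN.
Qed.

Lemma lift_edge_onto d : gs d <> v0 -> exists e, lift_edge e = d.
Proof. by move/lift_edgeK; exists (val d).1. Qed.

Lemma src_neq_rng_v0 d : gr d = v0 -> gs d <> v0.
Proof.
move=> d_v0 /src_v0 d_f; move: d_v0.
by rewrite d_f rng_f_split0; apply: lift_vertex_neq_v0.
Qed.

Lemma src_in_v0 d : gr d = v0 -> gs d = lift_vertex w.
Proof.
move=> d_v0; have [e ed] := lift_edge_onto (src_neq_rng_v0 d_v0).
move: d_v0; rewrite -ed rng_lift_edge src_lift_edge.
by case: ifP => [/andP [/eqP -> _] // | _ /lift_vertex_neq_v0].
Qed.

Lemma moveR_insplit_redirect :
  moveR H (redirect (from_to w v) (gr f)).
Proof.
have f0_v0 : gs (f_split ord0) = v0 by apply: val_inj.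
exists v0, (f_split ord0), (lift_vertex w).
split; first exact: regular_of_single_edge f0_v0 src_v0.
split=> //; split; first exact: src_v0.
split; first by rewrite rng_f_split0; apply: lift_vertex_neq_v0.
split; first exact: src_in_v0.
exists lift_vertex, (fun e => if from_to w v e then inr (lift_edge e)
                              else inl (lift_edge e)).
split; [|split].
- split; first exact: lift_vertex_inj.
  move=> y; split=> [/lift_vertex_onto // | [x <-]].
  exact: lift_vertex_neq_v0.
- split.
    move=> e e' /(congr1 (@untag _)).
    by do 2 case: ifP => _ /=; apply: lift_edge_inj.
  case=> d; split.
  + move=> [d_nv0 rd_nv0]; have [e ed] := lift_edge_onto d_nv0.
    exists e; move: rd_nv0; rewrite -ed rng_lift_edge.
    by case: ifP.
  + move=> [e]; case: ifP => // e_P [<-].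
    rewrite src_lift_edge rng_lift_edge e_P.
    by split; apply: lift_vertex_neq_v0.
  + move=> rd_v0; have [e ed] := lift_edge_onto (src_neq_rng_v0 rd_v0).
    exists e; move: rd_v0; rewrite -ed rng_lift_edge.
    by case: ifP => // _ /lift_vertex_neq_v0.
  + by move=> [e]; case: ifP => // e_P [<-]; rewrite rng_lift_edge e_P.
- move=> e; case: ifP => e_P; split.
  + by case/andP: e_P => /eqP ->.
  + by rewrite rng_f_split0 /= e_P.
  + by rewrite src_lift_edge.
  + by rewrite rng_lift_edge /= e_P.
Qed.

End SplitOffOneSource.

Section RedirectCollapse.
Variables (X : graph) (v : gV X) (f : gE X) (w : gV X).
Hypotheses (fnv : gr f <> v) (wnv : w <> v).

Local Notation Xr := (redirect (from_to w v) (gr f)).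

(* The edges [e f] with e coming from w become ordinary edges of Xr. *)
Definition retag (y : gE X + gE X) : gE X + gE X :=
  if y is inr e then (if gs e == w then inl e else inr e) else y.

Lemma untag_retag y : untag (retag y) = untag y.
Proof. by case: y => //= e; case: ifP. Qed.

Lemma retag_collapse_edge y :
  collapse_edge v y -> collapse_edge (X := Xr) v (retag y).
Proof.
case: y => e /=.
  by case=> e_nv e_rng; rewrite /from_to (introF eqP e_rng) andbF.
move=> e_v; case: eqP => [e_w | e_nw] /=; rewrite /from_to e_v eqxx.
  by rewrite e_w eqxx.
by rewrite (introF eqP e_nw).
Qed.

Lemma retag_onto z :
  collapse_edge (X := Xr) v z -> exists2 y, collapse_edge v y & retag y = z.
Proof.
case: z => e /=; rewrite /from_to.
  case: andP => [[/eqP e_w /eqP e_v] | e_nP] [e_nv e_rng].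
    by exists (inr e) => //=; rewrite e_w eqxx.
  by exists (inl e).
case: andP => [_ /fnv // | e_nP e_v].
exists (inr e) => //=; case: eqP => // e_w.
by case: e_nP; split; apply/eqP.
Qed.

Lemma is_collapse_redirect (C : graph) :
  is_collapse v f C -> is_collapse (X := Xr) v f C.
Proof.
move=> [p0 [p1 [bij0 [bij1 compat]]]].
exists p0, (retag \o p1); split=> //; split.
  apply: bij_onto_comp bij1 _ _ => [y y' Qy Qy' | z].
    move=> /(congr1 (@untag _)); rewrite !untag_retag => eq_untag.
    by rewrite (collapse_edge_tag Qy) (collapse_edge_tag Qy') eq_untag.
  split=> [/retag_onto // | [y /retag_collapse_edge Qy <-] //].
move=> d /=; have := compat d.
have /(proj2 bij1) : exists d', p1 d' = p1 d by exists d.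
case: (p1 d) => e /= Qe [src_d rng_d]; last case: ifP => e_w /=.
- by rewrite /from_to (introF eqP Qe.2) andbF.
- by rewrite /from_to e_w Qe eqxx.
- by rewrite /= if_same.
Qed.

End RedirectCollapse.

Lemma in_edge_src_neq (X : graph) (v : gV X) (f : gE X) (e : gE X) :
  (forall e, gs e = v -> e = f) -> gr f <> v -> gr e = v -> gs e <> v.
Proof. by move=> v_f fnv ev /v_f e_f; apply: fnv; rewrite -e_f. Qed.

Lemma move_equiv_split_off (X : graph) (v : gV X) (f : gE X) (e0 e1 : gE X) :
  gs f = v -> (forall e, gs e = v -> e = f) -> gr f <> v ->
  gr e0 = v -> gr e1 = v -> gs e0 <> gs e1 ->
  X ~M redirect (from_to (gs e0) v) (gr f).
Proof.
move=> fv v_f fnv e0v e1v e01.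
apply: me_trans (me_move _) (me_move _); last first.
  by right; left; exact: moveR_insplit_redirect (gs e0) fv v_f fnv.
do 3 right; apply: moveI_insplit.
- exact: regular_of_single_edge fv v_f.
- by move/(_ e0).
- move=> i; case: (ord2P i) => ->.
    by exists e0; rewrite /source_class eqxx.
  by exists e1; rewrite /source_class (introF eqP (nesym e01)).
Qed.

Lemma is_collapse_move_equiv (C : graph) (n : nat) :
  forall (X : graph) (v : gV X) (f : gE X) (S : {set gV X}),
  gs f = v -> (forall e, gs e = v -> e = f) -> gr f <> v ->
  #|S| <= n -> (forall e, gr e = v -> gs e \in S) ->
  is_collapse v f C -> X ~M C.
Proof.
elim: n => [|n IH] X v f S fv v_f fnv S_n S_in Xcoll.
all: have [[e0 [e1 [e0v e1v e01]]] | no_pair] :=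
  classic (exists e e', [/\ gr e = v, gr e' = v & gs e <> gs e']).
all: try by apply: me_move; right; left; exact: moveR_of_is_collapse Xcoll.
  by move: S_n (S_in e0 e0v); rewrite leqn0 => /eqP/cards0_eq ->; rewrite inE.
have wnv := in_edge_src_neq v_f fnv e0v.
apply: me_trans (move_equiv_split_off fv v_f fnv e0v e1v e01) _.
apply: (IH (redirect (from_to (gs e0) v) (gr f)) v f (S :\ gs e0));
  last exact (is_collapse_redirect fnv wnv Xcoll).
all: rewrite //=.
- by rewrite if_same.
- by move: S_n; rewrite (cardsD1 (gs e0)) S_in.
- move=> e; rewrite /from_to; case: andP => [_ /fnv // | e_nP e_v].
  rewrite in_setD1 S_in // andbT; apply/eqP => e_w.
  by case: e_nP; split; apply/eqP.
Qed.

Theorem lemma5p1 (G : graph) (v : gV G) (f0 : gE G)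
  (Hreg : regular v) (Hnsrc : ~ is_source v)
  (Hf0 : gs f0 = v) (Hone : forall e : gE G, gs e = v -> e = f0)
  (Hnl : gr f0 <> v) :
  G ~M collapse Hnl Hone.
Proof.
apply: (@is_collapse_move_equiv _ #|[set: gV G]| G v f0 [set: gV G]) => //.
exact (is_collapse_collapse Hnl Hone).
Qed.
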